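(* Let $n\ge2$, let $P$ be a partial $n$-Metric on a set $X$, and let $\{x_i\}_{i\in\mathbb{N}}$ be a Cauchy sequence in $X$. If $\{x_i\}$ has a special limit in $X$, then that special limit is unique.
   Context: Notation: $\langle a\rangle^k$ denotes the $k$-tuple $(a,\dots,a)$ inserted into an argument list. A partial $n$-Metric on $X$ is a function $P:X^n\to\mathbb{R}$ such that for all $x_1,\dots,x_n,a\in X$: (1) $P(\langle x_1\rangle^n)\le P(\langle x_1\rangle^{n-1},x_2)$; (2) $P$ is invariant under permutations of its arguments; (3) $P(\langle x_1\rangle^{n-1},x_2)=P(\langle x_1\rangle^n)$ and $P(\langle x_2\rangle^{n-1},x_1)=P(\langle x_2\rangle^n)$ iff $x_1=x_2$; (4) $P(x_1,\dots,x_n)\le P(x_1,\dots,x_{n-1},a)+P(\langle a\rangle^{n-1},x_n)-P(\langle a\rangle^n)$. $X$ carries the topology generated by the balls $B_\epsilon(x)=\{y\mid P(\langle x\rangle^{n-1},y)-P(\langle x\rangle^n)<\epsilon\}$; thus $a$ is a limit of $\{x_i\}$ iff for every $\epsilon>0$ there is $N$ with $P(\langle a\rangle^{n-1},x_i)-P(\langle a\rangle^n)<\epsilon$ for all $i>N$. $\{x_i\}$ is Cauchy with central distance $r\in\mathbb{R}$ if for every $\epsilon>0$ there is $N$ such that $|P(x_{i_1},\dots,x_{i_n})-r|<\epsilon$ for all $i_1,\dots,i_n>N$. A special limit of a Cauchy sequence with central distance $r$ is a limit $a$ with $P(\langle a\rangle^n)=r$. *)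

(* An n-ary function P : X^n -> R is represented as
   P : list X -> R, of which only the values on lists of length n matter.
   The k-tuple <a>^k is (repeat a k). *)
From Stdlib Require Import Reals List Permutation.
Open Scope R_scope.

Definition partial_n_metric {X : Type} (n : nat) (P : list X -> R) : Prop :=
  (forall x1 x2 : X, P (repeat x1 n) <= P (repeat x1 (n - 1)%nat ++ x2 :: nil)) /\
  (forall l l' : list X, length l = n -> Permutation l l' -> P l = P l') /\
  (forall x1 x2 : X,
     (P (repeat x1 (n - 1)%nat ++ x2 :: nil) = P (repeat x1 n) /\
      P (repeat x2 (n - 1)%nat ++ x1 :: nil) = P (repeat x2 n)) <-> x1 = x2) /\
  (forall (l : list X) (xn a : X), length l = (n - 1)%nat ->
     P (l ++ xn :: nil) <=
       P (l ++ a :: nil) + P (repeat a (n - 1)%nat ++ xn :: nil) - P (repeat a n)).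

(* a is a limit of x in the topology generated by the balls B_eps *)
Definition is_limit {X : Type} (n : nat) (P : list X -> R) (x : nat -> X) (a : X)
  : Prop :=
  forall eps : R, eps > 0 -> exists N : nat, forall i : nat, (i > N)%nat ->
    P (repeat a (n - 1)%nat ++ x i :: nil) - P (repeat a n) < eps.

Definition cauchy_central {X : Type} (n : nat) (P : list X -> R) (x : nat -> X) (r : R)
  : Prop :=
  forall eps : R, eps > 0 -> exists N : nat, forall idx : list nat,
    length idx = n -> Forall (fun i => (i > N)%nat) idx ->
    Rabs (P (map x idx) - r) < eps.

Definition is_cauchy {X : Type} (n : nat) (P : list X -> R) (x : nat -> X) : Prop :=
  exists r : R, cauchy_central n P x r.

Definition special_limit {X : Type} (n : nat) (P : list X -> R) (x : nat -> X)
  (r : R) (a : X) : Prop :=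
  cauchy_central n P x r /\ is_limit n P x a /\ P (repeat a n) = r.

From Stdlib Require Import Reals List Permutation Lra Lia.
Open Scope R_scope.

(* If a and b are special limits of the same Cauchy sequence, both central
   distances equal the central distance r of the sequence.  Triangulating
   through a far term x_i, axiom (4) gives
     P(a,...,a,b) <= P(a,...,a,x_i) + P(x_i,...,x_i,b) - P(x_i,...,x_i),
   where the first term is close to r because x_i -> a, the last is close to r
   by the Cauchy property, and the middle one is at most P(b,...,b) = r up to a
   small error, obtained by replacing the x_i by b one at a time with (4).
   Hence P(a,...,a,b) <= P(a,...,a), symmetrically with a and b exchanged, and
   axioms (1) and (3) force a = b. *)

Lemma repeat_pred_snoc (A : Type) (c : A) (k : nat) :
  (1 <= k)%nat -> repeat c (k - 1) ++ c :: nil = repeat c k.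
Proof.
  intros Hk. rewrite <- repeat_cons. replace k with (S (k - 1)) at 2 by lia.
  reflexivity.
Qed.

Lemma cauchy_central_diag (X : Type) (n : nat) (P : list X -> R) (x : nat -> X)
    (r : R) :
  cauchy_central n P x r ->
  forall eps : R, eps > 0 -> exists N : nat, forall i : nat, (i > N)%nat ->
    Rabs (P (repeat (x i) n) - r) < eps.
Proof.
  intros C eps Heps.
  destruct (C eps Heps) as [N HN].
  exists N. intros i Hi.
  rewrite <- map_repeat. apply HN; [apply repeat_length |].
  apply Forall_forall. intros j Hj. apply repeat_spec in Hj. lia.
Qed.

Lemma cauchy_central_unique (X : Type) (n : nat) (P : list X -> R)
    (x : nat -> X) (r1 r2 : R) :
  cauchy_central n P x r1 -> cauchy_central n P x r2 -> r1 = r2.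
Proof.
  intros C1 C2.
  apply Rle_antisym; apply Rle_plus_epsilon; intros eps Heps;
    destruct (cauchy_central_diag _ _ _ _ _ C1 (eps / 2) ltac:(lra)) as [N1 HN1];
    destruct (cauchy_central_diag _ _ _ _ _ C2 (eps / 2) ltac:(lra)) as [N2 HN2];
    specialize (HN1 (S (N1 + N2)) ltac:(lia));
    specialize (HN2 (S (N1 + N2)) ltac:(lia));
    apply Rabs_def2 in HN1; apply Rabs_def2 in HN2; lra.
Qed.

Section PartialNMetric.

Variables (X : Type) (n : nat) (P : list X -> R).
Hypothesis HP : partial_n_metric n P.

(* Each entry y of l is traded for one more copy of c by axiom (4), at cost
   P(c,...,c,y) - P(c,...,c) <= e. *)
Lemma partial_n_metric_repeat_app_le (c : X) (e : R) :
  forall (l : list X) (k : nat), (length l + k = n)%nat ->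
  Forall (fun y => P (repeat c (n - 1) ++ y :: nil) - P (repeat c n) <= e) l ->
  P (repeat c k ++ l) <= P (repeat c n) + INR (length l) * e.
Proof.
  destruct HP as [_ [Hperm [_ Htri]]].
  intros l. induction l as [|y l IH]; intros k Hk Hl.
  - simpl in Hk |- *. rewrite app_nil_r. subst k. lra.
  - apply Forall_cons_iff in Hl as [Hy Hl].
    simpl in Hk.
    assert (Hlen : length (repeat c k ++ l) = (n - 1)%nat)
      by (rewrite length_app, repeat_length; lia).
    assert (Hy_last : P (repeat c k ++ y :: l) = P ((repeat c k ++ l) ++ y :: nil)).
    { apply Hperm; [rewrite length_app, repeat_length; simpl; lia |].
      rewrite <- app_assoc. apply Permutation_app_head.
      apply Permutation_cons_append. }
    assert (Hc_front : P ((repeat c k ++ l) ++ c :: nil) = P (repeat c (S k) ++ l)).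
    { apply Hperm; [rewrite length_app, Hlen; simpl; lia |].
      simpl. apply Permutation_sym, Permutation_cons_append. }
    specialize (Htri _ y c Hlen).
    specialize (IH (S k) ltac:(lia) Hl).
    rewrite Hy_last. simpl length. rewrite S_INR. lra.
Qed.

Lemma special_limits_gap_le (x : nat -> X) (r : R) (a b : X) :
  (1 <= n)%nat -> special_limit n P x r a -> special_limit n P x r b ->
  P (repeat a (n - 1) ++ b :: nil) <= P (repeat a n).
Proof.
  intros Hn [C [La Ea]] [_ [Lb Eb]].
  pose proof HP as [_ [_ [_ Htri]]].
  rewrite Ea. apply Rle_plus_epsilon. intros eps Heps.
  assert (HnR : 0 <= INR n) by apply pos_INR.
  set (e := eps / (INR n + 2)).
  assert (He : 0 < e) by (unfold e; apply Rdiv_lt_0_compat; lra).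
  assert (Heps_e : (INR n + 2) * e = eps) by (unfold e; field; lra).
  destruct (La e He) as [N1 HN1].
  destruct (Lb e He) as [N2 HN2].
  destruct (cauchy_central_diag _ _ _ _ _ C e He) as [N3 HN3].
  set (i := S (N1 + N2 + N3)).
  specialize (HN1 i ltac:(unfold i; lia)).
  specialize (HN2 i ltac:(unfold i; lia)).
  specialize (HN3 i ltac:(unfold i; lia)).
  apply Rabs_def2 in HN3.
  assert (Hxi_b : P (repeat (x i) (n - 1) ++ b :: nil) <= r + INR n * e).
  { rewrite <- Eb.
    replace n with (length (repeat (x i) (n - 1) ++ b :: nil)) at 3
      by (rewrite length_app, repeat_length; simpl; lia).
    apply (partial_n_metric_repeat_app_le b e _ 0);
      [rewrite length_app, repeat_length; simpl; lia |].
    apply Forall_app. split.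
    - apply Forall_forall. intros z Hz. apply repeat_spec in Hz. subst z. lra.
    - repeat constructor. rewrite repeat_pred_snoc by exact Hn. lra. }
  specialize (Htri (repeat a (n - 1)) b (x i) (repeat_length _ _)).
  rewrite Ea in HN1. lra.
Qed.

End PartialNMetric.

Theorem theorem4p15 (X : Type) (n : nat) (P : list X -> R) (x : nat -> X) :
  (2 <= n)%nat -> partial_n_metric n P -> is_cauchy n P x ->
  forall (ra rb : R) (a b : X),
    special_limit n P x ra a -> special_limit n P x rb b -> a = b.
Proof.
  intros Hn HP _ ra rb a b Sa Sb.
  assert (Hr : ra = rb)
    by (apply (cauchy_central_unique X n P x); [apply Sa | apply Sb]).
  subst rb.
  pose proof HP as [Hdiag [_ [Hsep _]]].
  apply Hsep. split; apply Rle_antisym.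
  - apply (special_limits_gap_le X n P HP x ra); [lia | assumption..].
  - apply Hdiag.
  - apply (special_limits_gap_le X n P HP x ra); [lia | assumption..].
  - apply Hdiag.
Qed.
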